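(* Let $(\rho,\mu,\nu)$ be a regular triple of standard representations of $\mathcal{W}_N$ and $a,c\in\mathbb{Z}/N$. Then, as $N^2\times N^2$ matrices, $$R(\rho,\mu,\nu|a,c)=(y_{\rho\mu}y_{\mu\nu})^P\,\omega^{ac/2}\;Y_1^{-a}Z_1^{-c}\,R(\rho,\mu,\nu)\,Z_1^{c}Z_2^{-a},$$ where $Y_1=Y\otimes\mathrm{id}$, $Z_1=Z\otimes\mathrm{id}$, $Z_2=\mathrm{id}\otimes Z$.
   Context: $N\ge3$ odd, $N=2P+1$, $\omega=e^{2\pi i/N}$; for integers $r,s$ with $s$ invertible mod $N$, $\omega^{r/s}:=\omega^{rs'}$, $ss'\equiv1\pmod N$ (so $\omega^{1/2}=\omega^{P+1}$). Indices run over $\mathbb{Z}/N$; $\delta(n)=1$ if $n\equiv0\pmod N$, else $0$. $X,Z,Y$ are the $N\times N$ matrices $X_{ij}=\delta(i-j-1)$, $Z_{ij}=\omega^i\delta(i-j)$, $Y=\omega^{1/2}XZ$, i.e. $Y_{ij}=\omega^{1/2+j}\delta(i-j-1)$. $\mathcal{W}_N$: unital $\mathbb{C}$-algebra generated by $E,E^{-1},D$ with $EE^{-1}=E^{-1}E=1$, $ED=\omega DE$, $\Delta(E)=E\otimes E$, $\Delta(D)=E\otimes D+D\otimes1$; tensor products via $\Delta$; cyclic = $E,D$ act invertibly; regular = every tensor product of consecutive terms cyclic. The standard representation with parameters $(a_\rho,y_\rho)\in(\mathbb{C}^* )^2$ is $\rho(E)=a_\rho^2Z$, $\rho(D)=a_\rho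 y_\rho X$. A determination $u\mapsto u^{1/N}$ of the $N$-th root is fixed; $\rho\mu$ has $a_{\rho\mu}=a_\rho a_\mu$, $y_{\rho\mu}=(a_\rho^Ny_\mu^N+y_\rho^Na_\mu^{-N})^{1/N}$; products are associative. Standing convention: $-\frac{y_\rho y_\nu}{y_{\rho\mu\nu}y_\mu}=r\big(\frac{y_{\rho\mu}y_{\mu\nu}}{y_{\rho\mu\nu}y_\mu}\big)$. Functions: for $x^N+y^N=z^N$, $\omega(x,y,z|n)=\prod_{j=1}^n\frac{y}{z-x\omega^j}$ ($0\le n\le N-1$), extended $N$-periodically; $\omega(x,y,z|m,n)=\omega(x,y,z|m-n)\omega^{n^2/2}$. $g(x)=\prod_{j=1}^{N-1}(1-x\omega^j)^{j/N}$, $r(x)=(1-x^N)^{1/N}$ (analytic continuations from $0$ to $\mathbb{C}\setminus\{|x|\ge1,\arg x\in\theta+\frac{2\pi}{N}\mathbb{Z}\}$, $\theta$ fixed so $g$ avoids the cuts); $h(x)=x^{-P}g(x)/g(1)$. $R(\rho,\mu,\nu)^{\gamma,\delta}_{\alpha,\beta}=h\big(\frac{y_{\rho\mu}y_{\mu\nu}}{y_{\rho\mu\nu}y_\mu}\big)\omega^{\alpha\delta}\omega(y_{\rho\mu\nu}y_\mu,y_\rho y_\nu,y_{\rho\mu}y_{\mu\nu}|\gamma,\alpha)\delta(\gamma+\delta-\beta)$; $R(\rho,\mu,\nu|a,c)^{\gamma,\delta}_{\alpha,\beta}=(y_{\rho\mu}y_{\mu\nu})^P\omega^{c(\gamma-\alpha)-ac/2}R(\rho,\mu,\nu)^{\gamma-a,\delta}_{\alpha,\beta-a}$.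 Matrix convention: an array $M^{\gamma,\delta}_{\alpha,\beta}$ is the $N^2\times N^2$ matrix with entry $M^{\gamma,\delta}_{\alpha,\beta}$ in row $(\alpha,\beta)$ and column $(\gamma,\delta)$; $A\otimes B$ has entry $A_{\alpha\gamma}B_{\beta\delta}$ in row $(\alpha,\beta)$, column $(\gamma,\delta)$; products are matrix products. *)

From mathcomp Require Import all_boot all_order all_algebra.
From mathcomp Require Export complex mxtens.
From mathcomp Require Import reals trigo.
Set Implicit Arguments. Unset Strict Implicit. Unset Printing Implicit Defensive.
Import Order.TTheory GRing.Theory Num.Theory.
Local Open Scope ring_scope.

Section Defs.
Variable R : realType.
Local Notation C := (R[i]).
Variable N : nat.

(* P with N = 2P+1 *)
Definition Phalf : nat := N./2.

Definition omega : C := Complex (cos (2 * pi / N%:R)) (sin (2 * pi / N%:R)).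

Definition wpow (k : int) : C := omega ^ k.

(* omega^{k/2} := omega^{k s'} with s' = P+1 the inverse of 2 mod N *)
Definition whalf (k : int) : C := omega ^ (k * (Phalf.+1)%:Z).

Definition delta (n : int) : C := if (N%:Z %| n)%Z then 1 else 0.

Definition ii (i : 'I_N) : int := (nat_of_ord i)%:Z.

Definition Xm : 'M[C]_N := \matrix_(i, j) delta (ii i - ii j - 1).
Definition Zm : 'M[C]_N := \matrix_(i, j) (wpow (ii i) * delta (ii i - ii j)).
Definition Ym : 'M[C]_N := whalf 1 *: (Xm *m Zm).

(* a representation of W_N on C^n: images of E and D *)
Definition rep (n : nat) := ('M[C]_n * 'M[C]_n)%type.

Definition std_rep (a y : C) : rep N := (a ^+ 2 *: Zm, (a * y) *: Xm).

Definition tens_rep n m (r : rep n) (s : rep m) : rep (n * m) :=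
  (r.1 *t s.1, r.1 *t s.2 + r.2 *t (1%:M : 'M[C]_m)).

Definition cyclic_rep n (r : rep n) : Prop := r.1 \in unitmx /\ r.2 \in unitmx.

Definition regular_triple (ar yr am ym an yn : C) : Prop :=
  let rho := std_rep ar yr in let mu := std_rep am ym in let nu := std_rep an yn in
  cyclic_rep rho /\ cyclic_rep mu /\ cyclic_rep nu /\
  cyclic_rep (tens_rep rho mu) /\ cyclic_rep (tens_rep mu nu) /\
  cyclic_rep (tens_rep (tens_rep rho mu) nu).

(* parameters of a product rho mu, given the fixed determination rt of u^{1/N} *)
Definition a_prod (ar am : C) : C := ar * am.
Definition y_prod (rt : C -> C) (ar yr am ym : C) : C :=
  rt (ar ^+ N * ym ^+ N + yr ^+ N * am ^- N).

Definition omf (x y z : C) (n : int) : C :=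
  \prod_(1 <= j < (absz (n %% N%:Z)%Z).+1) (y / (z - x * omega ^+ j)).
Definition omf2 (x y z : C) (m n : int) : C := omf x y z (m - n) * whalf (n ^+ 2).

Definition hfun (g : C -> C) (x : C) : C := x ^- Phalf * g x / g 1.

(* R(rho,mu,nu)^{gam,del}_{alp,bet}, arguments in order alp bet gam del *)
Definition Rarr (g : C -> C) (yr ym yn yrm ymn yrmn : C) (alp bet gam del : int) : C :=
  hfun g ((yrm * ymn) / (yrmn * ym)) * wpow (alp * del)
  * omf2 (yrmn * ym) (yr * yn) (yrm * ymn) gam alp * delta (gam + del - bet).

Definition Rarr_ac (g : C -> C) (yr ym yn yrm ymn yrmn : C) (a c : int)
  (alp bet gam del : int) : C :=
  (yrm * ymn) ^+ Phalf * (wpow (c * (gam - alp)) * whalf (- (a * c)))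
  * Rarr g yr ym yn yrm ymn yrmn alp (bet - a) (gam - a) del.

(* the N^2 x N^2 matrix with entry M^{gam,del}_{alp,bet} in row (alp,bet), column (gam,del) *)
Definition arr2mx (F : int -> int -> int -> int -> C) : 'M[C]_(N * N) :=
  \matrix_(i, j) F (ii (mxtens_unindex i).1) (ii (mxtens_unindex i).2)
                   (ii (mxtens_unindex j).1) (ii (mxtens_unindex j).2).

End Defs.

From mathcomp Require Import all_boot all_order all_algebra.
From mathcomp Require Import complex mxtens.
From mathcomp Require Import reals trigo.
From mathcomp Require Import ring.
Set Implicit Arguments. Unset Strict Implicit. Unset Printing Implicit Defensive.
Import Order.TTheory GRing.Theory Num.Theory.
Local Open Scope ring_scope.

(* Z, Y and all their powers and inverses are monomial matrices (one nonzero
   entry per row), so conjugating the array R by them only shifts indices and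
   multiplies entries by powers of omega: Y^-a shifts alpha to alpha + a.  This
   shift is absorbed by the covariance
     R(alpha, beta - a, gamma - a, delta)
       = omega^(-a (alpha + delta) - a^2/2) R(alpha + a, beta, gamma, delta),
   which holds because R depends on alpha only through N-periodic quantities.
   The remaining powers of omega agree once every exponent is written in
   half-units, omega^k = omega^(2k/2), where the identity is one of integers. *)

Section ReductionModN.
Variable N : nat.
Hypothesis N_gt0 : (0 < N)%N.

Lemma modz_ord_proof x : (absz (x %% N%:Z)%Z < N)%N.
Proof.
have N_neq0 : N%:Z != 0 by rewrite eqz_nat -lt0n.
by rewrite -ltz_nat gez0_abs ?modz_ge0 // ltz_pmod ?ltz_nat.
Qed.

Definition ordz x : 'I_N := Ordinal (modz_ord_proof x).

Lemma ii_ordz x : ii (ordz x) = (x %% N%:Z)%Z.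
Proof. by rewrite /ii /= gez0_abs // modz_ge0 // eqz_nat -lt0n. Qed.

Lemma ordz_ii i : ordz (ii i) = i.
Proof. by apply: val_inj => /=; rewrite modz_small //= ltz_nat. Qed.

Lemma eq_ordz x y : (ordz x == ordz y) = (N%:Z %| x - y)%Z.
Proof. by rewrite -eqz_mod_dvd -(inj_eq val_inj) -eqz_nat -!/(ii _) !ii_ordz. Qed.

Lemma dvdz_sub_ii x i : (N%:Z %| x - ii i)%Z = (i == ordz x).
Proof. by rewrite -eq_ordz ordz_ii eq_sym. Qed.

Lemma dvdz_ii_ordz x : (N%:Z %| ii (ordz x) - x)%Z.
Proof. by rewrite -eq_ordz ordz_ii. Qed.

End ReductionModN.

Section MonomialMatrix.
Variable R : pzRingType.

Definition monomial_mx n (d : 'I_n -> R) (p : 'I_n -> 'I_n) : 'M[R]_n :=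
  \matrix_(i, j) (d i * (j == p i)%:R).

Lemma mul_monomial_mx n m d p (M : 'M[R]_(n, m)) :
  monomial_mx d p *m M = \matrix_(i, j) (d i * M (p i) j).
Proof.
apply/matrixP => i j; rewrite !mxE (bigD1 (p i)) //= big1 => [|k /negbTE nk].
  by rewrite mxE eqxx mulr1 addr0.
by rewrite mxE nk mulr0 mul0r.
Qed.

Lemma mul_mx_monomial n m d p q (M : 'M[R]_(m, n)) :
  cancel p q -> cancel q p ->
  M *m monomial_mx d p = \matrix_(i, j) (M i (q j) * d (q j)).
Proof.
move=> pK qK; apply/matrixP => i j; rewrite !mxE (bigD1 (q j)) //= big1.
  by rewrite mxE qK eqxx mulr1 addr0.
move=> k nk; rewrite mxE (_ : (j == p k) = false) ?mulr0 //.
by apply: contraNF nk => /eqP ->; rewrite pK.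
Qed.

Lemma mulmx_monomial n d e p q :
  monomial_mx d p *m monomial_mx e q
  = monomial_mx (fun i : 'I_n => d i * e (p i)) (q \o p).
Proof. by rewrite mul_monomial_mx; apply/matrixP => i j; rewrite !mxE mulrA. Qed.

Lemma eq_monomial_mx n d p q : p =1 q -> monomial_mx d p = monomial_mx d q :> 'M_n.
Proof. by move=> eq_pq; apply/matrixP => i j; rewrite !mxE eq_pq. Qed.

Lemma monomial_mx1 n : monomial_mx (fun=> 1) id = 1%:M :> 'M[R]_n.
Proof. by apply/matrixP => i j; rewrite !mxE mul1r eq_sym. Qed.

Lemma tensmx_monomial n m d e p q :
  monomial_mx d p *t monomial_mx e q
  = monomial_mx (fun k : 'I_(n * m) =>
                   d (mxtens_unindex k).1 * e (mxtens_unindex k).2)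
                (fun k => mxtens_index (p (mxtens_unindex k).1, q (mxtens_unindex k).2)).
Proof.
apply/matrixP => k l; rewrite !mxE.
rewrite -[l in RHS]mxtens_unindexK (inj_eq (can_inj (@mxtens_indexK n m))).
case: (mxtens_unindex l) => l1 l2 /=; rewrite xpair_eqE.
by case: (l1 == _); case: (l2 == _); rewrite ?mulr0 ?mul0r ?mulr1.
Qed.

End MonomialMatrix.

Lemma mxtens_index_pair m n (k : 'I_(m * n)) :
  mxtens_index ((mxtens_unindex k).1, (mxtens_unindex k).2) = k.
Proof. by rewrite -surjective_pairing mxtens_unindexK. Qed.

Lemma invmx_monomial (R : comUnitRingType) n (d e : 'I_n -> R) p q :
  (forall i, e i * d (q i) = 1) -> cancel q p ->
  invmx (monomial_mx d p) = monomial_mx e q.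
Proof.
move=> ed qK; have inv_l : monomial_mx e q *m monomial_mx d p = 1%:M.
  rewrite mulmx_monomial -monomial_mx1; apply/matrixP => i j.
  by rewrite !mxE ed /= qK.
have [_ unit_d] := mulmx1_unit inv_l.
by rewrite -[RHS]mulmx1 -(mulmxV unit_d) mulmxA inv_l mul1mx.
Qed.

Section Weyl.
Variables (R : realType) (N : nat).
Hypotheses (N_gt0 : (0 < N)%N) (N_odd : odd N).

Local Notation C := R[i].
Local Notation omega := (omega R N).
Local Notation wpow := (wpow R N).
Local Notation whalf := (whalf R N).

Lemma omega_exp k :
  omega ^+ k = Complex (cos (2 * pi / N%:R *+ k)) (sin (2 * pi / N%:R *+ k)).
Proof.
elim: k => [|k IH]; first by rewrite expr0 !mulr0n cos0 sin0.
rewrite exprS IH; set x := 2 * pi / _.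
rewrite mulrS cosD sinD {1}/GRing.mul /=.
by congr Complex; rewrite addrC.
Qed.

Lemma omega_expN : omega ^+ N = 1.
Proof.
rewrite omega_exp -mulr_natr divfK ?pnatr_eq0 -?lt0n //.
by rewrite mulr_natl cos2pi sin2pi.
Qed.

Lemma omega_neq0 : omega != 0.
Proof.
apply/eqP => om0; move/eqP: omega_expN.
by rewrite om0 expr0n eqn0Ngt N_gt0 eq_sym oner_eq0.
Qed.

Lemma wpowD m n : wpow (m + n) = wpow m * wpow n.
Proof. exact: expfzDr omega_neq0. Qed.

Lemma wpow_eqmod m n : (N%:Z %| m - n)%Z -> wpow m = wpow n.
Proof.
case/dvdzP => q def_mn; rewrite -[m](subrK n) def_mn wpowD.
by rewrite /wpow [q * _]mulrC -exprz_exp (omega_expN : omega ^ N%:Z = 1) exp1rz mul1r.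
Qed.

Lemma whalfD m n : whalf (m + n) = whalf m * whalf n.
Proof. by rewrite /whalf mulrDl; apply: wpowD. Qed.

Lemma double_Phalf_succ : (2 * (Phalf N).+1)%N = N.+1.
Proof. by rewrite /Phalf mul2n doubleS -[in RHS](odd_double_half N) N_odd add1n. Qed.

Lemma wpow_whalf m : wpow m = whalf (2 * m).
Proof.
apply: wpow_eqmod; apply/dvdzP; exists (- m).
have double_h : 2 * (Phalf N).+1%:Z = N%:Z + 1.
  by rewrite [2](_ : _ = 2%N%:Z) // -PoszM double_Phalf_succ intS addrC.
by rewrite [2 * m]mulrC -mulrA double_h; ring.
Qed.

Lemma whalf_sqr_eqmod m n : (N%:Z %| m - n)%Z -> whalf (m ^+ 2) = whalf (n ^+ 2).
Proof.
move=> dvd_mn; apply: wpow_eqmod.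
have -> : m ^+ 2 * (Phalf N).+1%:Z - n ^+ 2 * (Phalf N).+1%:Z
          = (m - n) * ((m + n) * (Phalf N).+1%:Z) by ring.
exact: dvdz_mulr.
Qed.

Local Notation ordz := (ordz N_gt0).
Local Notation Zm := (Zm R N).
Local Notation Ym := (Ym R N).

Definition zshift (k : int) (i : 'I_N) : 'I_N := ordz (ii i + k).

Lemma dvdz_ii_zshift k i : (N%:Z %| ii (zshift k i) - (ii i + k))%Z.
Proof. exact: dvdz_ii_ordz. Qed.

Lemma zshiftD k l i : zshift l (zshift k i) = zshift (k + l) i.
Proof.
apply/eqP; rewrite eq_ordz.
by rewrite (_ : _ - _ = ii (zshift k i) - (ii i + k)) ?dvdz_ii_zshift //; ring.
Qed.

Lemma zshiftK k : cancel (zshift k) (zshift (- k)).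
Proof. by move=> i; rewrite zshiftD addrN /zshift addr0 ordz_ii. Qed.

Lemma wpow_ii_zshift m k i : wpow (m * ii (zshift k i)) = wpow (m * (ii i + k)).
Proof. by apply: wpow_eqmod; rewrite -mulrBr dvdz_mull ?dvdz_ii_zshift. Qed.

Lemma delta_dvdz x : delta R N x = (N%:Z %| x)%Z%:R.
Proof. by rewrite /delta; case: ifP. Qed.

Lemma Zm_monomial : Zm = monomial_mx (fun i => wpow (ii i)) id.
Proof. by apply/matrixP => i j; rewrite !mxE delta_dvdz dvdz_sub_ii ordz_ii. Qed.

Lemma Ym_monomial :
  Ym = monomial_mx (fun i => whalf 1 * wpow (ii i - 1)) (zshift (-1)).
Proof.
have Xm_monomial : Xm R N = monomial_mx (fun=> 1) (zshift (-1)).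
  apply/matrixP => i j; rewrite !mxE delta_dvdz.
  by rewrite (_ : _ - _ - _ = ii i + -1 - ii j) ?dvdz_sub_ii //; ring.
apply/matrixP => i j; rewrite /Ym Xm_monomial Zm_monomial mulmx_monomial !mxE.
by rewrite mul1r -[ii (zshift _ _)]mul1r wpow_ii_zshift mul1r mulrA.
Qed.

Lemma Zm_exp k : Zm ^+ k = monomial_mx (fun i => wpow (k%:Z * ii i)) id.
Proof.
elim: k => [|k IHk].
  by rewrite expr0 -idmxE -monomial_mx1; apply/matrixP => i j; rewrite !mxE.
rewrite exprS -mulmxE IHk Zm_monomial mulmx_monomial; apply/matrixP => i j; rewrite !mxE.
by rewrite -wpowD intS; congr (wpow _ * _); ring.
Qed.

Lemma invmx_Zm_exp k : invmx (Zm ^+ k) = monomial_mx (fun i => wpow (- k%:Z * ii i)) id.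
Proof. by rewrite Zm_exp; apply: invmx_monomial => // i; rewrite -wpowD mulNr addNr. Qed.

Lemma Ym_exp k :
  Ym ^+ k = monomial_mx (fun i => wpow (k%:Z * ii i) * whalf (- k%:Z ^+ 2)) (zshift (- k%:Z)).
Proof.
elim: k => [|k IHk].
  rewrite expr0 -idmxE -monomial_mx1; apply/matrixP => i j; rewrite !mxE.
  by rewrite /zshift addr0 ordz_ii mul0r (_ : - _ ^+ 2 = 0) // /whalf /wpow !mul0r mulr1.
rewrite exprS -mulmxE IHk Ym_monomial mulmx_monomial; apply/matrixP => i j; rewrite !mxE /=.
rewrite zshiftD wpow_ii_zshift !wpow_whalf -!whalfD (_ : -1 + - k%:Z = - k.+1%:Z); last first.
  by rewrite intS; ring.
by congr (whalf _ * _); rewrite intS; ring.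
Qed.

Lemma invmx_Ym_exp k :
  invmx (Ym ^+ k) = monomial_mx (fun i => wpow (- (k%:Z * ii i)) * whalf (- k%:Z ^+ 2)) (zshift k).
Proof.
rewrite Ym_exp; apply: invmx_monomial; last exact: zshiftK.
by move=> i; rewrite wpow_ii_zshift !wpow_whalf -!whalfD (_ : _ + _ = 0) //; ring.
Qed.

Lemma arr2mxE (F : int -> int -> int -> int -> C) alp bet gam del :
  arr2mx N F (mxtens_index (alp, bet)) (mxtens_index (gam, del))
  = F (ii alp) (ii bet) (ii gam) (ii del).
Proof. by rewrite mxE !mxtens_indexK. Qed.

Lemma conj_arr2mx_entry (F : int -> int -> int -> int -> C) (a c : nat) alp bet gam del :
  ((invmx (Ym ^+ a) *t 1%:M) *m (invmx (Zm ^+ c) *t 1%:M) *m arr2mx N F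
   *m (Zm ^+ c *t 1%:M) *m (1%:M *t invmx (Zm ^+ a)))
    (mxtens_index (alp, bet)) (mxtens_index (gam, del))
  = wpow (- (a%:Z * ii alp)) * whalf (- a%:Z ^+ 2) * wpow (- c%:Z * (ii alp + a%:Z))
    * F (ii (zshift a alp)) (ii bet) (ii gam) (ii del)
    * (wpow (c%:Z * ii gam) * wpow (- a%:Z * ii del)).
Proof.
rewrite -mulmxA !tensmx_mul !mulmx1 !mul1mx invmx_Ym_exp !invmx_Zm_exp Zm_exp.
rewrite mulmx_monomial -monomial_mx1 !tensmx_monomial mul_monomial_mx.
rewrite [X in _ *m X](eq_monomial_mx _ (@mxtens_index_pair N N)).
rewrite (@mul_mx_monomial _ _ _ _ id id) // !mxE !mxtens_indexK /=.
by rewrite mulr1 wpow_ii_zshift.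
Qed.

Section RMatrix.
Variables (g : C -> C) (yr ym yn yrm ymn yrmn : C).
Local Notation Rarr := (Rarr N g yr ym yn yrm ymn yrmn).

Lemma omf_eqmod (x y z : C) n m : (N%:Z %| n - m)%Z -> omf N x y z n = omf N x y z m.
Proof. by rewrite -eqz_mod_dvd => /eqP eq_nm; rewrite /omf eq_nm. Qed.

Lemma Rarr_eqmod x x' bet gam del :
  (N%:Z %| x - x')%Z -> Rarr x bet gam del = Rarr x' bet gam del.
Proof.
move=> dvd_x; rewrite /Rarr /omf2 (whalf_sqr_eqmod dvd_x).
rewrite (@wpow_eqmod (x * del) (x' * del)) -?mulrBl ?dvdz_mulr //.
rewrite (@omf_eqmod _ _ _ (gam - x) (gam - x')) //.
by rewrite (_ : _ - _ = - (x - x')) ?rpredN //; ring.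
Qed.

Lemma Rarr_shift x bet gam del a :
  Rarr x (bet - a) (gam - a) del
  = whalf (- (2 * a * (x + del) + a ^+ 2)) * Rarr (x + a) bet gam del.
Proof.
rewrite /Rarr /omf2 (_ : gam - a - x = gam - (x + a)); last by ring.
rewrite (_ : gam - a + del - (bet - a) = gam + del - bet); last by ring.
have exponents : wpow (x * del) * whalf (x ^+ 2)
  = whalf (- (2 * a * (x + del) + a ^+ 2)) * wpow ((x + a) * del) * whalf ((x + a) ^+ 2).
  by rewrite !wpow_whalf -!whalfD; congr whalf; ring.
by ring: exponents.
Qed.

Lemma Rarr_acE (a c : nat) alp bet gam del :
  Rarr_ac N g yr ym yn yrm ymn yrmn a c alp bet gam del
  = (yrm * ymn) ^+ Phalf N * whalf (a%:Z * c%:Z)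
    * (wpow (- (a%:Z * alp)) * whalf (- a%:Z ^+ 2) * wpow (- c%:Z * (alp + a%:Z))
       * Rarr (alp + a%:Z) bet gam del * (wpow (c%:Z * gam) * wpow (- a%:Z * del))).
Proof.
rewrite /Rarr_ac Rarr_shift.
have exponents : wpow (c%:Z * (gam - alp)) * whalf (- (a%:Z * c%:Z))
    * whalf (- (2 * a%:Z * (alp + del) + a%:Z ^+ 2))
  = whalf (a%:Z * c%:Z) * wpow (- (a%:Z * alp)) * whalf (- a%:Z ^+ 2)
    * wpow (- c%:Z * (alp + a%:Z)) * wpow (c%:Z * gam) * wpow (- a%:Z * del).
  by rewrite !wpow_whalf -!whalfD; congr whalf; ring.
by ring: exponents.
Qed.

End RMatrix.

End Weyl.

Theorem lemma6p8 (R : realType) (N : nat) (oddN : odd N) (N3 : (3 <= N)%N)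
  (rt : R[i] -> R[i]) (rtN : forall u : R[i], rt u ^+ N = u)
  (r : R[i] -> R[i]) (rN : forall x : R[i], r x ^+ N = 1 - x ^+ N)
  (g : R[i] -> R[i])
  (ar yr am ym an yn : R[i])
  (ar0 : ar != 0) (yr0 : yr != 0) (am0 : am != 0) (ym0 : ym != 0)
  (an0 : an != 0) (yn0 : yn != 0)
  (reg : regular_triple N ar yr am ym an yn)
  (a c : 'I_N) :
  let yrm := y_prod N rt ar yr am ym in
  let ymn := y_prod N rt am ym an yn in
  let yrmn := y_prod N rt (a_prod ar am) yrm an yn in
  - (yr * yn) / (yrmn * ym) = r ((yrm * ymn) / (yrmn * ym)) ->
  arr2mx N (Rarr_ac N g yr ym yn yrm ymn yrmn (ii a) (ii c))
  = ((yrm * ymn) ^+ Phalf N * whalf R N (ii a * ii c)) *: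
    ((invmx (Ym R N ^+ a) *t (1%:M : 'M[R[i]]_N))
     *m (invmx (Zm R N ^+ c) *t (1%:M : 'M[R[i]]_N))
     *m arr2mx N (Rarr N g yr ym yn yrm ymn yrmn)
     *m (Zm R N ^+ c *t (1%:M : 'M[R[i]]_N))
     *m ((1%:M : 'M[R[i]]_N) *t invmx (Zm R N ^+ a))).
Proof.
(* The identity is formal in the parameters: regularity, the determinations [rt]
   and [r] and the standing convention are not needed. *)
move=> yrm ymn yrmn _.
have N_gt0 : (0 < N)%N by apply: leq_trans N3.
apply/matrixP => k l.
case: (mxtens_indexP k) => alp bet; case: (mxtens_indexP l) => gam del.
rewrite [RHS]mxE (conj_arr2mx_entry N_gt0 oddN) arr2mxE (Rarr_acE N_gt0 oddN).
by rewrite (Rarr_eqmod N_gt0 g yr ym yn yrm ymn yrmn _ _ _ (dvdz_ii_zshift N_gt0 _ _)).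
Qed.
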